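(* Let $R$ be a ring. (1) If $R$ is $\Gamma$-graded and quasi-Baer, then $R$ is graded quasi-Baer. (2) If $R$ is $\Gamma$-graded, graded quasi-Baer, and the (left and right) annihilators of its two-sided ideals are graded ideals, then $R$ is quasi-Baer.
   Context: Rings are associative, not necessarily unital. $R$ is $\Gamma$-graded ($\Gamma$ a group) if $R=\bigoplus_{\gamma\in\Gamma}R_\gamma$ with $R_\gamma R_\delta\subseteq R_{\gamma\delta}$; homogeneous elements are those of $\bigcup_\gamma R_\gamma$; a (one- or two-sided) ideal $I$ is graded if $I=\bigoplus_\gamma(I\cap R_\gamma)$. $\operatorname{ann}_r(X)=\{r\mid Xr=0\}$, $\operatorname{ann}_l(X)=\{r\mid rX=0\}$. $R$ is quasi-Baer if for every right ideal $I$ there is an idempotent $\varepsilon\in R$ with $\operatorname{ann}_r(I)=\varepsilon R$ (this is left-right symmetric, and equivalent to requiring it for two-sided ideals $I$; it forces $R$ to be unital). $R$ is graded quasi-Baer if for every graded right ideal $I$ there is a homogeneous idempotent $\varepsilon\in R$ with $\operatorname{ann}_r(I)=\varepsilon R$ (likewise left-right symmetric and equivalent to the version with graded two-sided ideals). *)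

(* Non-unital associative rings are modelled as a zmodType
   carrier with an explicit associative, biadditive multiplication. *)
From Stdlib Require List.
From mathcomp Require Import all_boot all_algebra.
Set Implicit Arguments. Unset Strict Implicit. Unset Printing Implicit Defensive.
Import GRing.Theory.
Local Open Scope ring_scope.

Definition is_group (G : Type) (gmul : G -> G -> G) (g1 : G) (ginv : G -> G) : Prop :=
  (forall a b c, gmul a (gmul b c) = gmul (gmul a b) c) /\
  (forall a, gmul g1 a = a) /\ (forall a, gmul a g1 = a) /\
  (forall a, gmul (ginv a) a = g1) /\ (forall a, gmul a (ginv a) = g1).

Definition is_ring (R : zmodType) (mul : R -> R -> R) : Prop :=
  (forall x y z, mul x (mul y z) = mul (mul x y) z) /\
  (forall x y z, mul (x + y) z = mul x z + mul y z) /\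
  (forall x y z, mul x (y + z) = mul x y + mul x z).

Definition lsum (G : Type) (R : zmodType) (s : seq (G * R)) : R :=
  \sum_(p <- s) p.2.

(* R = (+)_{g in G} Rg g  with  Rg g * Rg h <= Rg (g h). *)
Definition is_grading (G : Type) (gmul : G -> G -> G) (R : zmodType)
    (mul : R -> R -> R) (Rg : G -> R -> Prop) : Prop :=
  (forall g, Rg g 0) /\
  (forall g x y, Rg g x -> Rg g y -> Rg g (x - y)) /\
  (forall g h x y, Rg g x -> Rg h y -> Rg (gmul g h) (mul x y)) /\
  (forall r : R, exists s : seq (G * R),
      List.NoDup (map fst s) /\ List.Forall (fun p => Rg p.1 p.2) s /\ r = lsum s) /\
  (forall s : seq (G * R),
      List.NoDup (map fst s) -> List.Forall (fun p => Rg p.1 p.2) s -> lsum s = 0 ->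
      List.Forall (fun p => p.2 = 0) s).

Definition homogeneous (G : Type) (R : zmodType) (Rg : G -> R -> Prop) (x : R) : Prop :=
  exists g, Rg g x.

Definition is_right_ideal (R : zmodType) (mul : R -> R -> R) (I : R -> Prop) : Prop :=
  I 0 /\ (forall x y, I x -> I y -> I (x - y)) /\ (forall x r, I x -> I (mul x r)).

Definition is_left_ideal (R : zmodType) (mul : R -> R -> R) (I : R -> Prop) : Prop :=
  I 0 /\ (forall x y, I x -> I y -> I (x - y)) /\ (forall x r, I x -> I (mul r x)).

Definition is_ideal (R : zmodType) (mul : R -> R -> R) (I : R -> Prop) : Prop :=
  is_right_ideal mul I /\ is_left_ideal mul I.

(* I = (+)_g (I /\ Rg g): every element of I is a finite sum of homogeneous
   elements of I of pairwise distinct degrees. *)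
Definition graded_set (G : Type) (R : zmodType) (Rg : G -> R -> Prop) (I : R -> Prop) : Prop :=
  forall x, I x -> exists s : seq (G * R),
    List.NoDup (map fst s) /\ List.Forall (fun p => Rg p.1 p.2 /\ I p.2) s /\ x = lsum s.

Definition ann_r (R : zmodType) (mul : R -> R -> R) (X : R -> Prop) : R -> Prop :=
  fun r => forall x, X x -> mul x r = 0.

Definition ann_l (R : zmodType) (mul : R -> R -> R) (X : R -> Prop) : R -> Prop :=
  fun r => forall x, X x -> mul r x = 0.

Definition ann_r_is_eR (R : zmodType) (mul : R -> R -> R) (I : R -> Prop) (e : R) : Prop :=
  forall y, ann_r mul I y <-> exists r, y = mul e r.

Definition quasi_Baer (R : zmodType) (mul : R -> R -> R) : Prop :=
  forall I, is_right_ideal mul I ->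
    exists e, mul e e = e /\ ann_r_is_eR mul I e.

Definition graded_quasi_Baer (G : Type) (R : zmodType) (mul : R -> R -> R)
    (Rg : G -> R -> Prop) : Prop :=
  forall I, is_right_ideal mul I -> graded_set Rg I ->
    exists e, homogeneous Rg e /\ mul e e = e /\ ann_r_is_eR mul I e.

(* (1) Let ann_r(I) = eR for a graded right ideal I, and let e_1 be the
   identity-degree component of e.  As I is spanned by homogeneous elements
   and left multiplication by a homogeneous element shifts degrees
   injectively, ann_r(I) is closed under taking components.  A homogeneous
   y of degree k in ann_r(I) satisfies y = e y, and the degree-k component of
   e y is e_1 y; hence e_1 is a left unit on ann_r(I), so ann_r(I) = e_1 R.
   (2) For a right ideal I, K = ann_l(ann_r(I)) is a graded right ideal with
   ann_r(K) = ann_r(I), so the idempotent given for K also serves for I. *)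

From HB Require Import structures.
From Stdlib Require Import ClassicalEpsilon.
From Stdlib Require List.
From mathcomp Require Import all_boot all_algebra.
Set Implicit Arguments. Unset Strict Implicit. Unset Printing Implicit Defensive.
Import GRing.Theory.
Local Open Scope ring_scope.

Lemma In_mem (T : eqType) (x : T) (s : seq T) : List.In x s <-> x \in s.
Proof.
elim: s => [|y s IHs] //=; rewrite in_cons IHs eq_sym.
by split=> [[->|->]|/orP[/eqP->|->]]; rewrite ?eqxx ?orbT //; [left | right].
Qed.

Lemma Forall_in (T : eqType) (P : T -> Prop) (s : seq T) :
  List.Forall P s <-> {in s, forall x, P x}.
Proof.
rewrite List.Forall_forall.
by split=> h x hx; apply: h; apply/In_mem.
Qed.

Lemma uniq_NoDup (T : eqType) (s : seq T) : uniq s -> List.NoDup s.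
Proof.
elim: s => [|x s IHs] /=; first by constructor.
by case/andP=> xs us; constructor; [rewrite In_mem; apply/negP | exact: IHs].
Qed.

Section NonUnitalRing.

Variables (R : zmodType) (mul : R -> R -> R).
Hypothesis ringR : is_ring mul.

Lemma mulA x y z : mul x (mul y z) = mul (mul x y) z.
Proof. by case: ringR. Qed.

Lemma mulDl x y z : mul (x + y) z = mul x z + mul y z.
Proof. by case: ringR => _ []. Qed.

Lemma mulDr x y z : mul x (y + z) = mul x y + mul x z.
Proof. by case: ringR => _ []. Qed.

Lemma mul0x x : mul 0 x = 0.
Proof. by apply: (addrI (mul 0 x)); rewrite -mulDl !addr0. Qed.

Lemma mulx0 x : mul x 0 = 0.
Proof. by apply: (addrI (mul x 0)); rewrite -mulDr !addr0. Qed.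

Lemma mulxB x y z : mul x (y - z) = mul x y - mul x z.
Proof. by apply/eqP; rewrite eq_sym subr_eq -mulDr subrK. Qed.

Lemma mulBx x y z : mul (x - y) z = mul x z - mul y z.
Proof. by apply/eqP; rewrite eq_sym subr_eq -mulDl subrK. Qed.

Lemma mul_suml (I : Type) (s : seq I) (P : pred I) (F : I -> R) y :
  mul (\sum_(i <- s | P i) F i) y = \sum_(i <- s | P i) mul (F i) y.
Proof. exact: (big_morph (mul^~ y) (fun a b => mulDl a b y) (mul0x y)). Qed.

Lemma mul_sumr (I : Type) (s : seq I) (P : pred I) (F : I -> R) x :
  mul x (\sum_(i <- s | P i) F i) = \sum_(i <- s | P i) mul x (F i).
Proof. exact: (big_morph (mul x) (mulDr x) (mulx0 x)). Qed.

Lemma ann_r_right_ideal (X : R -> Prop) : is_right_ideal mul (ann_r mul X).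
Proof.
split; first by move=> x _; rewrite mulx0.
split=> [a b ha hb x hx | a r ha x hx].
  by rewrite mulxB ha // hb // subrr.
by rewrite mulA ha // mul0x.
Qed.

Lemma ann_r_ideal (I : R -> Prop) :
  is_right_ideal mul I -> is_ideal mul (ann_r mul I).
Proof.
move=> [_ [_ IM]]; have [ann0 [annB _]] := ann_r_right_ideal I.
split; first exact: ann_r_right_ideal.
split=> //; split=> // a r ha x hx.
by rewrite mulA; apply: ha; apply: IM.
Qed.

Lemma ann_l_right_ideal (J : R -> Prop) :
  is_left_ideal mul J -> is_right_ideal mul (ann_l mul J).
Proof.
move=> [_ [_ JM]]; split; first by move=> x _; rewrite mul0x.
split=> [a b ha hb x hx | a r ha x hx].
  by rewrite mulBx ha // hb // subrr.
by rewrite -mulA; apply: ha; apply: JM.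
Qed.

Lemma ann_r_ann_l_ann_r (X : R -> Prop) y :
  ann_r mul (ann_l mul (ann_r mul X)) y <-> ann_r mul X y.
Proof. by split=> [hy x hx | hy x hx]; [apply: hy => z; apply | apply: hx]. Qed.

Lemma ann_r_is_eR_of_left_unit (I : R -> Prop) e :
  ann_r mul I e -> (forall y, ann_r mul I y -> mul e y = y) ->
  mul e e = e /\ ann_r_is_eR mul I e.
Proof.
move=> he e_unit; split; first exact: e_unit.
move=> y; split=> [hy | [r ->]]; first by exists y; rewrite e_unit.
by have [_ [_ annM]] := ann_r_right_ideal I; apply: annM.
Qed.

Theorem quasi_Baer_of_graded_quasi_Baer (G : Type) (Rg : G -> R -> Prop) :
  graded_quasi_Baer mul Rg ->
  (forall J, is_ideal mul J -> graded_set Rg (ann_l mul J)) ->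
  quasi_Baer mul.
Proof.
move=> gqB ann_l_graded I rI.
have idJ := ann_r_ideal rI.
have [e [_ [ee he]]] := gqB _ (ann_l_right_ideal idJ.2) (ann_l_graded _ idJ).
by exists e; split=> // y; rewrite -ann_r_ann_l_ann_r.
Qed.

End NonUnitalRing.

Section GradedRing.

Variables (G : Type) (gmul : G -> G -> G) (g1 : G) (ginv : G -> G).
Hypothesis groupG : is_group gmul g1 ginv.
Variables (R : zmodType) (mul : R -> R -> R).
Hypothesis ringR : is_ring mul.
Variable Rg : G -> R -> Prop.
Hypothesis gradingR : is_grading gmul mul Rg.

(* The grading group has no decidable equality; degrees are compared
   classically. *)
Let G_comparable : comparable G :=
  fun a b => excluded_middle_informative (a = b).
HB.instance Definition _ := comparableMixin G_comparable.

Lemma gmul1 g : gmul g1 g = g.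
Proof. by case: groupG => _ []. Qed.

Lemma gmul_cancel_l : right_injective gmul.
Proof.
case: groupG => gA [g1g [gg1 [gVg _]]] h a b eq_hab.
by rewrite -(g1g a) -(g1g b) -(gVg h) -!gA eq_hab.
Qed.

Lemma gmul_cancel_r : left_injective gmul.
Proof.
case: groupG => gA [_ [gg1 [_ ggV]]] h a b eq_ahb.
by rewrite -(gg1 a) -(gg1 b) -(ggV h) !gA eq_ahb.
Qed.

Lemma Rg0 g : Rg g 0.
Proof. by case: gradingR. Qed.

Lemma RgB g x y : Rg g x -> Rg g y -> Rg g (x - y).
Proof. by case: gradingR => _ [gradedB _]; apply: gradedB. Qed.

Lemma RgN g x : Rg g x -> Rg g (- x).
Proof. by rewrite -sub0r; apply: RgB; apply: Rg0. Qed.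

Lemma RgD g x y : Rg g x -> Rg g y -> Rg g (x + y).
Proof. by move=> hx /RgN hy; rewrite -[y]opprK; apply: RgB. Qed.

Lemma RgM g h x y : Rg g x -> Rg h y -> Rg (gmul g h) (mul x y).
Proof. by case: gradingR => _ [_ [gradedM _]]; apply: gradedM. Qed.

Definition homogeneous_seq (s : seq (G * R)) :=
  {in s, forall p, Rg p.1 p.2}.

Lemma grading_decomposition r : exists s, homogeneous_seq s /\ r = lsum s.
Proof.
case: gradingR => _ [_ [_ [dec _]]]; have [s [_ [hs ->]]] := dec r.
by exists s; split=> //; apply/Forall_in.
Qed.

Lemma grading_independent s :
  uniq (map fst s) -> homogeneous_seq s -> lsum s = 0 ->
  {in s, forall p, p.2 = 0}.
Proof.
case: gradingR => _ [_ [_ [_ indep]]] us hs s0.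
by apply/Forall_in; apply: indep; [exact: uniq_NoDup | apply/Forall_in |].
Qed.

Definition lsum_deg (s : seq (G * R)) g := \sum_(p <- s | p.1 == g) p.2.

Lemma Rg_lsum_deg s g : homogeneous_seq s -> Rg g (lsum_deg s g).
Proof.
move=> hs; rewrite /lsum_deg big_seq_cond.
apply: (big_ind (Rg g)); [exact: Rg0 | exact: RgD |].
by move=> p /andP[ps /eqP <-]; apply: hs.
Qed.

Lemma lsum_partition s :
  lsum s = \sum_(g <- undup (map fst s)) lsum_deg s g.
Proof.
rewrite /lsum_deg; under eq_bigr do rewrite big_mkcond.
rewrite exchange_big; apply: eq_big_seq => p ps /=.
have p1D : p.1 \in undup (map fst s) by rewrite mem_undup; apply: map_f.
rewrite -big_mkcond -big_filter.
have -> : [seq g <- undup (map fst s) | p.1 == g] = [:: p.1].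
  rewrite -(filter_pred1_uniq (undup_uniq _) p1D).
  by apply: eq_filter => g; rewrite eq_sym.
by rewrite big_seq1.
Qed.

Lemma lsum_deg_eq0 s g : homogeneous_seq s -> lsum s = 0 -> lsum_deg s g = 0.
Proof.
move=> hs s0; set D := undup (map fst s).
have [gD | gND] := boolP (g \in D); last first.
  rewrite /lsum_deg big_seq_cond big1 // => p /andP[ps /eqP pg].
  by move: gND; rewrite mem_undup -pg map_f.
pose t := [seq (h, lsum_deg s h) | h <- D].
have ut : uniq (map fst t) by rewrite -map_comp map_id undup_uniq.
have ht : homogeneous_seq t by move=> _ /mapP[h _ ->]; apply: Rg_lsum_deg.
have t0 : lsum t = 0 by rewrite /lsum big_map -lsum_partition.
exact: (grading_independent ut ht t0 (map_f _ gD)).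
Qed.

Lemma lsum_deg_eq s t g : homogeneous_seq s -> homogeneous_seq t ->
  lsum s = lsum t -> lsum_deg s g = lsum_deg t g.
Proof.
move=> hs ht st; apply/eqP; rewrite -subr_eq0; apply/eqP.
pose u := s ++ [seq (p.1, - p.2) | p <- t].
have hu : homogeneous_seq u.
  move=> p; rewrite mem_cat => /orP[/hs // | /mapP[q /ht hq ->]].
  exact: RgN.
have u0 : lsum u = 0.
  rewrite /lsum big_cat big_map sumrN; apply/eqP.
  by rewrite subr_eq0 -/(lsum t) -st.
have := lsum_deg_eq0 g hu u0.
by rewrite /lsum_deg big_cat big_map sumrN.
Qed.

Definition decomp (r : R) : seq (G * R) :=
  proj1_sig (constructive_indefinite_description _ (grading_decomposition r)).

Lemma decompP r : homogeneous_seq (decomp r) /\ r = lsum (decomp r).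
Proof. by rewrite /decomp; case: constructive_indefinite_description. Qed.

Definition component g r := lsum_deg (decomp r) g.

Lemma component_lsum s g :
  homogeneous_seq s -> component g (lsum s) = lsum_deg s g.
Proof.
move=> hs; have [hd e] := decompP (lsum s).
by apply: lsum_deg_eq; rewrite -?e.
Qed.

Lemma Rg_component g r : Rg g (component g r).
Proof. by apply: Rg_lsum_deg; case: (decompP r). Qed.

Lemma component_id g x : Rg g x -> component g x = x.
Proof.
move=> hx; have hs : homogeneous_seq [:: (g, x)].
  by move=> p; rewrite inE => /eqP ->.
have := component_lsum g hs.
by rewrite /lsum_deg /lsum !big_cons !big_nil /= eqxx !addr0.
Qed.

Lemma sum_component r :
  r = \sum_(g <- undup (map fst (decomp r))) component g r.
Proof. by have [_ {1}->] := decompP r; rewrite lsum_partition. Qed.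

Lemma lsum_map (k : G * R -> G) (c : R -> R) s :
  {morph c : a b / a + b} -> c 0 = 0 ->
  lsum [seq (k p, c p.2) | p <- s] = c (lsum s).
Proof. by move=> cD c0; rewrite /lsum big_map (big_morph c cD c0). Qed.

Lemma lsum_deg_map (k : G -> G) (c : R -> R) s g :
  injective k -> {morph c : a b / a + b} -> c 0 = 0 ->
  lsum_deg [seq (k p.1, c p.2) | p <- s] (k g) = c (lsum_deg s g).
Proof.
move=> k_inj cD c0; rewrite /lsum_deg big_map (big_morph c cD c0) /=.
by apply: eq_bigl => p; rewrite (inj_eq k_inj).
Qed.

Lemma component_mull h g x r :
  Rg h x -> component (gmul h g) (mul x r) = mul x (component g r).
Proof.
move=> hx; have [hr {1}->] := decompP r.
have xD := mulDr ringR x; have x0 := mulx0 ringR x.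
rewrite -(lsum_map (fun p => gmul h p.1) _ xD x0) component_lsum.
  exact: lsum_deg_map _ _ (@gmul_cancel_l h) xD x0.
by move=> _ /mapP[p /hr hp ->]; apply: RgM.
Qed.

Lemma component_mulr h g x r :
  Rg h x -> component (gmul g h) (mul r x) = mul (component g r) x.
Proof.
move=> hx; have [hr {1}->] := decompP r.
have Dx : {morph mul^~ x : a b / a + b} by move=> a b; apply: mulDl.
have x0 := mul0x ringR x.
rewrite -(lsum_map (fun p => gmul p.1 h) _ Dx x0) component_lsum.
  exact: lsum_deg_map _ _ (@gmul_cancel_r h) Dx x0.
by move=> _ /mapP[p /hr hp ->]; apply: RgM.
Qed.

Lemma ann_r_component (I : R -> Prop) y g :
  graded_set Rg I -> ann_r mul I y -> ann_r mul I (component g y).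
Proof.
move=> gradedI hy x /gradedI [s [_ [/Forall_in hs ->]]].
rewrite /lsum (mul_suml ringR) big_seq big1 // => p /hs [hp Ip].
by rewrite -(component_mull _ _ hp) hy // (component_id (Rg0 _)).
Qed.

Theorem graded_quasi_Baer_of_quasi_Baer :
  quasi_Baer mul -> graded_quasi_Baer mul Rg.
Proof.
move=> qB I rI gradedI; have [e [ee he]] := qB I rI.
have e_unit y : ann_r mul I y -> mul e y = y.
  by move=> /he [r ->]; rewrite (mulA ringR) ee.
exists (component g1 e); split; first by exists g1; apply: Rg_component.
apply: ann_r_is_eR_of_left_unit => //.
  by apply: ann_r_component => //; apply/he; exists e.
move=> y hy; rewrite (sum_component y) (mul_sumr ringR).
apply: eq_bigr => k _; have yk := Rg_component k y.
rewrite -(component_mulr _ _ yk) gmul1 e_unit ?(component_id yk) //.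
exact: ann_r_component.
Qed.

End GradedRing.

Theorem proposition4p3
  (G : Type) (gmul : G -> G -> G) (g1 : G) (ginv : G -> G)
  (hG : is_group gmul g1 ginv)
  (R : zmodType) (mul : R -> R -> R) (hR : is_ring mul)
  (Rg : G -> R -> Prop) (hgr : is_grading gmul mul Rg) :
  (quasi_Baer mul -> graded_quasi_Baer mul Rg) /\
  (graded_quasi_Baer mul Rg ->
   (forall I, is_ideal mul I ->
      (is_ideal mul (ann_l mul I) /\ graded_set Rg (ann_l mul I)) /\
      (is_ideal mul (ann_r mul I) /\ graded_set Rg (ann_r mul I))) ->
   quasi_Baer mul).
Proof.
split; first exact: (graded_quasi_Baer_of_quasi_Baer hG hR hgr).
move=> gqB ann_graded; apply: (quasi_Baer_of_graded_quasi_Baer hR gqB).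
by move=> J /ann_graded [[_ ?] _].
Qed.
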